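(* Let $f_d:\mathbb{R}^n\times\mathbb{R}^m\to\mathbb{R}^n$ and $g_d:\mathbb{R}^n\times\mathbb{R}^m\to\mathbb{R}$ be of class $C^1$, $\tau>0$, and $H_d(x,p,u)=g_d(x,u)+\langle p,f_d(x,u)\rangle$. Writing $x^d_k=\frac{x_{k+1}+x_k}{2}$, $p^d_k=\frac{p_{k+1}+p_k}{2}$, $u^d_k=\frac{u_{k+1}+u_k}{2}$, consider the midpoint discrete necessary conditions for optimality $$\frac{x_{k+1}-x_k}{\tau}=D_2H_d(x^d_k,p^d_k,u^d_k),\quad \frac{p_{k+1}-p_k}{\tau}=-D_1H_d(x^d_k,p^d_k,u^d_k),\quad 0=D_3H_d(x^d_k,p^d_k,u^d_k).$$ Let $W\subset\mathbb{R}^{2n}$ be open and let $F:W\to\mathbb{R}^{2n}$ and $w:W\to\mathbb{R}^m$ be $C^1$ maps such that for every $(x_k,p_k)\in W$, with $(x_{k+1},p_{k+1})=F(x_k,p_k)$ and $u^d_k=w(x_k,p_k)$, these equations hold. Then $F$ is symplectic: $F^*\big(\sum_i dp_i\wedge dx^i\big)=\sum_i dp_i\wedge dx^i$.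
   Context: These equations arise from the discrete optimal control problem of minimizing $\sum_{k=0}^{n-1}g_d(x^d_k,u^d_k)\tau$ subject to $(x_{k+1}-x_k)/\tau=f_d(x^d_k,u^d_k)$, using the midpoint discretization. *)

From HB Require Import structures.
From mathcomp Require Import all_boot all_order all_algebra.
From mathcomp Require Import all_classical all_reals all_analysis.
Set Implicit Arguments. Unset Strict Implicit. Unset Printing Implicit Defensive.
Import Order.TTheory GRing.Theory Num.Theory.
Import numFieldNormedType.Exports.
Local Open Scope classical_set_scope.
Local Open Scope ring_scope.

Definition dotrv {R : realType} {k : nat} (a b : 'rV[R]_k) : R :=
  \sum_(i < k) a 0 i * b 0 i.

Definition gradrv {R : realType} {k : nat} (h : 'rV[R]_k -> R) (a : 'rV[R]_k)
  : 'rV[R]_k := \row_(i < k) ('d h a (delta_mx 0 i : 'rV[R]_k)).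

Definition C1 {R : realType} {U V : normedModType R} (f : U -> V) : Prop :=
  (forall z, differentiable f z) /\ (forall v : U, continuous (fun z => 'd f z v)).

Definition C1_on {R : realType} {U V : normedModType R} (W : set U) (f : U -> V)
  : Prop :=
  (forall z, W z -> differentiable f z) /\
  (forall v : U, forall z, W z -> {for z, continuous (fun y => 'd f y v)}).

Definition Hd {R : realType} {n m : nat}
  (fd : 'rV[R]_n * 'rV[R]_m -> 'rV[R]_n) (gd : 'rV[R]_n * 'rV[R]_m -> R)
  (x p : 'rV[R]_n) (u : 'rV[R]_m) : R :=
  gd (x, u) + dotrv p (fd (x, u)).

(* Canonical 2-form  sum_i dp_i /\ dx^i  on R^n x R^n (coordinates (x,p)):
   (sum_i dp_i /\ dx^i)(v, w) = <v_p, w_x> - <w_p, v_x>. *)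
Definition omega {R : realType} {n : nat} (v w : 'rV[R]_n * 'rV[R]_n) : R :=
  dotrv v.2 w.1 - dotrv w.2 v.1.

Definition symplectic_on {R : realType} {n : nat}
  (W : set ('rV[R]_n * 'rV[R]_n))
  (F : 'rV[R]_n * 'rV[R]_n -> 'rV[R]_n * 'rV[R]_n) : Prop :=
  forall z, W z -> forall v w, omega ('d F z v) ('d F z w) = omega v w.

From HB Require Import structures.
From mathcomp Require Import all_boot all_order all_algebra.
From mathcomp Require Import all_classical all_reals all_analysis.
From mathcomp Require Import ring lra.
Import Order.TTheory GRing.Theory Num.Theory.
Import numFieldNormedType.Exports.
Local Open Scope classical_set_scope.
Local Open Scope ring_scope.

(* Let θ be the 1-form p₁·dx₁ − p₀·dx₀ on W, where (x₁, p₁) = F(x₀, p₀); then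
   dθ = F^*ω − ω, so F is symplectic iff θ is closed.  The midpoint equations make θ
   exact, θ = dS with S = −τ g_d(x̄, u).
   As F is only C¹, S has no second derivative and closedness is proved by integrating
   around small triangles z, z + hv, z + hw: the increments of S around the triangle sum
   to zero, the increment along each edge PQ is the trapezoidal sum
   Σ ½(Aᵢ(P) + Aᵢ(Q))(Bᵢ(Q) − Bᵢ(P)) of θ = Σ Aᵢ dBᵢ up to o(h²), and the three
   trapezoidal sums add up to a sum of 2×2 determinants equal to h²·dθ(v, w) + o(h²). *)

Section RealEstimates.
Context {R : realType}.

Lemma mean_value_bound (f df : R -> R) (a b M : R) : a <= b ->
  (forall x, a <= x <= b -> is_derive x 1 f (df x)) ->
  (forall x, a <= x <= b -> `|df x| <= M) -> `|f b - f a| <= M * (b - a).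
Proof.
move=> ab f_df dfM.
have f_df' x : x \in `]a, b[ -> is_derive x 1 f (df x).
  by rewrite in_itv /= => /andP[/ltW xa /ltW xb]; apply: f_df; rewrite xa xb.
have f_cont : {within `[a, b], continuous f}.
  apply: derivable_within_continuous => x; rewrite in_itv /= => /andP[xa xb].
  by have [] := f_df x; rewrite ?xa ?xb.
have [c] := MVT_segment ab f_df' f_cont.
rewrite in_itv /= => /andP[ca cb] ->.
rewrite normrM (ger0_norm (_ : 0 <= b - a)) ?subr_ge0 //.
by rewrite ler_wpM2r ?subr_ge0 // dfM // ca cb.
Qed.

Lemma is_derive_sum_fin {I : finType} {h : I -> R -> R} {dh : I -> R} {x : R} :
  (forall i, is_derive x 1 (h i) (dh i)) ->
  is_derive x 1 (fun s => \sum_i h i s) (\sum_i dh i).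
Proof.
move=> h_dh; rewrite (_ : (fun s => _) = \sum_i h i); last first.
  by apply/funext => s; rewrite fct_sumE.
elim/big_ind2: _ => [|f1 df1 f2 df2 d1 d2|i _]; last exact: h_dh.
  exact: is_derive_cst.
exact: is_deriveD.
Qed.

Lemma approx_mul {x y a b s t e : R} : 0 <= s -> 0 <= t ->
  `|x - a * s| <= e * s -> `|y - b * t| <= e * t ->
  `|x * y - a * b * (s * t)| <= e * (s * t) * (`|a| + `|b| + e).
Proof.
move=> s0 t0 xa yb.
have -> : x * y - a * b * (s * t) =
    (x - a * s) * (y - b * t) + a * s * (y - b * t) + (x - a * s) * (b * t) by ring.
have es : 0 <= e * s := le_trans (normr_ge0 _) xa.
have et : 0 <= e * t := le_trans (normr_ge0 _) yb.
have n1 : `|(x - a * s) * (y - b * t)| <= e * s * (e * t) by rewrite normrM ler_pM.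
have n2 : `|a * s * (y - b * t)| <= `|a| * s * (e * t).
  by rewrite !normrM (ger0_norm s0) ler_wpM2l ?mulr_ge0.
have n3 : `|(x - a * s) * (b * t)| <= e * s * (`|b| * t).
  by rewrite !normrM (ger0_norm t0) ler_wpM2r ?mulr_ge0.
have := ler_normD ((x - a * s) * (y - b * t) + a * s * (y - b * t)) ((x - a * s) * (b * t)).
have := ler_normD ((x - a * s) * (y - b * t)) (a * s * (y - b * t)).
lra.
Qed.

Lemma approx_det {x1 y1 x2 y2 a1 b1 a2 b2 s t e : R} : 0 <= s -> 0 <= t ->
  `|x1 - a1 * s| <= e * s -> `|y1 - b1 * s| <= e * s ->
  `|x2 - a2 * t| <= e * t -> `|y2 - b2 * t| <= e * t ->
  `|(x1 * y2 - x2 * y1) - s * t * (a1 * b2 - a2 * b1)|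
    <= e * (s * t) * ((`|a1| + `|b1| + e) + (`|a2| + `|b2| + e)).
Proof.
move=> s0 t0 x1a y1b x2a y2b.
have := approx_mul s0 t0 x1a y2b; have := approx_mul t0 s0 x2a y1b.
have := ler_normB (x1 * y2 - a1 * b2 * (s * t)) (x2 * y1 - a2 * b1 * (t * s)).
rewrite (_ : _ - _ - _ = x1 * y2 - x2 * y1 - s * t * (a1 * b2 - a2 * b1)); last by ring.
lra.
Qed.

Lemma eq0_of_small (C M : R) : (forall e, 0 < e <= 1 -> `|C| <= e * M) -> C = 0.
Proof.
move=> small; apply/normr0_eq0/eqP; rewrite eq_le normr_ge0 andbT.
rewrite leNgt; apply/negP => C0.
have M0 : 0 <= M by have := small 1; rewrite ltr01 lexx mul1r => /(_ isT); apply: le_trans.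
have CM0 : 0 < `|C| + M by rewrite ltr_pwDl.
have := small (`|C| / (`|C| + M)).
rewrite divr_gt0 // ler_pdivrMr // mul1r lerDl M0 mulrAC ler_pdivlMr // => /(_ isT).
nra.
Qed.

End RealEstimates.

Section Segments.
Context {R : realType} {V : normedModType R}.

Lemma is_derive_along {f : V -> R} {P d : V} {t : R} :
  differentiable f (P + t *: d) ->
  is_derive t 1 (fun s => f (P + s *: d)) ('d f (P + t *: d) d).
Proof.
move=> df.
have quotE : (fun h : R => h^-1 *: (((fun s => f (P + s *: d)) \o shift t) (h *: 1)
                                     - f (P + t *: d)))
  = (fun h : R => h^-1 *: ((f \o shift (P + t *: d)) (h *: d) - f (P + t *: d))).
  apply/funext => h /=; congr (_ *: (f _ - _)).
  by rewrite /shift /= scalerDl [_ *: 1]mulr1 addrCA addrA.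
have fd : derivable f (P + t *: d) d by apply: diff_derivable.
by split; rewrite /derivable ?/derive quotE // -deriveE.
Qed.

Lemma segment_increment (f : V -> R) (P d : V) (a e h : R) : 0 <= h ->
  (forall t, 0 <= t <= h ->
     differentiable f (P + t *: d) /\ `|'d f (P + t *: d) d - a| <= e) ->
  `|f (P + h *: d) - f P - a * h| <= e * h.
Proof.
move=> h0 fd.
have := @mean_value_bound _ (fun s => f (P + s *: d) - a * s)
  (fun s => 'd f (P + s *: d) d - a) 0 h e h0.
rewrite scale0r addr0 mulr0 !subr0.
rewrite (_ : f (P + h *: d) - a * h - f P = f (P + h *: d) - f P - a * h); last by ring.
apply=> t /fd[ft ?] //; apply: is_deriveB; first exact: is_derive_along.
by have := is_deriveZ a (is_derive_id t 1); rewrite [_ *: 1]mulr1.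
Qed.

Lemma near_triangle (Q : set V) (z0 v w : V) : (\forall z \near z0, Q z) ->
  exists2 h : R, 0 < h & forall a b, 0 <= a -> 0 <= b -> a + b <= h ->
    Q (z0 + a *: v + b *: w).
Proof.
move=> /nbhs_ballP[r /= r0 Qr].
have N0 : 0 < `|v| + `|w| + 1 by rewrite ltr_pwDr ?addr_ge0.
exists (r / (2 * (`|v| + `|w| + 1))) => [|a b a0 b0 abh]; first by rewrite divr_gt0 ?mulr_gt0.
apply: Qr; rewrite -ball_normE /= -addrA opprD addNKr normrN.
apply: le_lt_trans (ler_normD _ _) _; rewrite !normrZ !ger0_norm //.
move: abh; rewrite ler_pdivlMr ?mulr_gt0 // => abh.
have := mulr_ge0 a0 (normr_ge0 w); have := mulr_ge0 b0 (normr_ge0 v); nra.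
Qed.

End Segments.

Section ExactOneForm.
Context {R : realType} {V : normedModType R} {I : finType}.
Variables (A B : I -> V -> R) (S : V -> R) (W : set V).
Hypothesis A_diff : forall i z, W z -> differentiable (A i) z.
Hypothesis B_diff : forall i z, W z -> differentiable (B i) z.
Hypothesis S_diff : forall z, W z -> differentiable S z.
Hypothesis dS_form : forall z, W z -> forall e, 'd S z e = \sum_i A i z * 'd (B i) z e.

Definition trapezoid (P Q : V) : R := \sum_i 2^-1 * (A i P + A i Q) * (B i Q - B i P).

Definition trapezoid_remainder (P d : V) (s : R) : R :=
  S (P + s *: d) - \sum_i (A i P * (B i (P + s *: d) - B i P)
    + 2^-1 * ((A i (P + s *: d) - A i P) * (B i (P + s *: d) - B i P))).

Lemma trapezoid_remainderE (P d : V) (h : R) :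
  trapezoid_remainder P d h - trapezoid_remainder P d 0 =
  S (P + h *: d) - S P - trapezoid P (P + h *: d).
Proof.
rewrite /trapezoid_remainder scale0r addr0.
rewrite [X in _ - (_ - X)]big1 => [|i _]; last by rewrite !subrr !mulr0 addr0.
rewrite subr0 (_ : \sum_i _ = trapezoid P (P + h *: d)); first by ring.
by apply: eq_bigr => i _; field.
Qed.

Lemma is_derive_trapezoid_remainder (P d : V) (s : R) : W (P + s *: d) ->
  is_derive s 1 (trapezoid_remainder P d)
    (\sum_i 2^-1 * ((A i (P + s *: d) - A i P) * 'd (B i) (P + s *: d) d
                    - 'd (A i) (P + s *: d) d * (B i (P + s *: d) - B i P))).
Proof.
move=> Ws.
have dA i := is_derive_along (A_diff i _ Ws).
have dB i := is_derive_along (B_diff i _ Ws).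
have dAP i := is_deriveB (dA i) (is_derive_cst (A i P) s 1).
have dBP i := is_deriveB (dB i) (is_derive_cst (B i P) s 1).
have dsum := is_derive_sum_fin (fun i => is_deriveD
  (is_deriveM (is_derive_cst (A i P) s 1) (dBP i))
  (is_deriveZ 2^-1 (is_deriveM (dAP i) (dBP i)))).
apply: is_derive_eq; first exact: is_deriveB (is_derive_along (S_diff _ Ws)) dsum.
rewrite dS_form // -sumrB; apply: eq_bigr => i _ /=.
rewrite !fctE /cst !subr0 scaler0 addr0.
move: (A i (P + s *: d)) (B i (P + s *: d)) ('d (A i) (P + s *: d) d) ('d (B i) (P + s *: d) d).
by move=> a b da db; rewrite /GRing.scale /=; field.
Qed.

Lemma trapezoid_error (P d : V) (h e : R) (a b : I -> R) : 0 <= h ->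
  (forall t, 0 <= t <= h -> W (P + t *: d) /\ forall i,
     `|'d (A i) (P + t *: d) d - a i| <= e /\ `|'d (B i) (P + t *: d) d - b i| <= e) ->
  `|S (P + h *: d) - S P - trapezoid P (P + h *: d)|
    <= e * h ^+ 2 * \sum_i (`|a i| + `|b i| + e).
Proof.
move=> h0 close.
have incr (f : V -> R) (c : R) t : 0 <= t <= h ->
    (forall z, W z -> differentiable f z) ->
    (forall s, 0 <= s <= h -> `|'d f (P + s *: d) d - c| <= e) ->
    `|f (P + t *: d) - f P - c * t| <= e * t.
  move=> /andP[t0 th] f_diff f_close; apply: segment_increment => // s /andP[s0 st].
  have sh : 0 <= s <= h by rewrite s0 (le_trans st th).
  by split; [apply: f_diff; case: (close s sh) | exact: f_close].
rewrite -trapezoid_remainderE.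
rewrite (_ : e * h ^+ 2 * _ = e * h * (\sum_i (`|a i| + `|b i| + e)) * (h - 0)); last first.
  by rewrite subr0; ring.
apply: mean_value_bound => // s sh.
  by apply: is_derive_trapezoid_remainder; case: (close s sh).
have [s0 s_h] := andP sh.
rewrite mulr_sumr; apply: le_trans (ler_norm_sum _ _ _) (ler_sum _ _) => i _.
have [dA dB] := (close s sh).2 i.
have iA := incr (A i) (a i) s sh (A_diff i) (fun s sh => ((close s sh).2 i).1).
have iB := incr (B i) (b i) s sh (B_diff i) (fun s sh => ((close s sh).2 i).2).
have dA1 : `|'d (A i) (P + s *: d) d - a i * 1| <= e * 1 by rewrite !mulr1.
have dB1 : `|'d (B i) (P + s *: d) d - b i * 1| <= e * 1 by rewrite !mulr1.
have := approx_det s0 ler01 iA iB dA1 dB1.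
rewrite [a i * b i]mulrC subrr mulr0 subr0 !mulr1 normrM ger0_norm ?invr_ge0 ?ler0n //.
have : e * s * (`|a i| + `|b i| + e) <= e * h * (`|a i| + `|b i| + e).
  by rewrite ler_wpM2r ?addr_ge0 ?(le_trans _ dA) // ler_wpM2l // (le_trans _ dA).
lra.
Qed.

Definition shoelace (P0 P1 P2 : V) : R :=
  \sum_i ((A i P1 - A i P0) * (B i P2 - B i P0) - (A i P2 - A i P0) * (B i P1 - B i P0)).

Lemma trapezoid_shoelace (P0 P1 P2 : V) :
  2 * (trapezoid P0 P1 + trapezoid P1 P2 - trapezoid P0 P2) = shoelace P0 P1 P2.
Proof.
rewrite /trapezoid /shoelace -big_split -sumrB mulr_sumr.
by apply: eq_bigr => i _ /=; field.
Qed.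

Definition exterior_diff (z v w : V) : R :=
  \sum_i ('d (A i) z v * 'd (B i) z w - 'd (A i) z w * 'd (B i) z v).

Definition close_derivs (e : R) (z0 d z : V) :=
  forall i, `|'d (A i) z d - 'd (A i) z0 d| <= e /\ `|'d (B i) z d - 'd (B i) z0 d| <= e.

Definition deriv_weight (e : R) (z0 d : V) : R :=
  \sum_i (`|'d (A i) z0 d| + `|'d (B i) z0 d| + e).

Lemma shoelace_approx {z0 v w : V} {h e : R} : 0 <= h ->
  (forall t, 0 <= t <= h -> W (z0 + t *: v) /\ close_derivs e z0 v (z0 + t *: v)) ->
  (forall t, 0 <= t <= h -> W (z0 + t *: w) /\ close_derivs e z0 w (z0 + t *: w)) ->
  `|shoelace z0 (z0 + h *: v) (z0 + h *: w) - h ^+ 2 * exterior_diff z0 v w|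
    <= e * h ^+ 2 * (deriv_weight e z0 v + deriv_weight e z0 w).
Proof.
move=> h0 close_v close_w.
have incr (f : V -> R) d : (forall z, W z -> differentiable f z) ->
    (forall t, 0 <= t <= h -> W (z0 + t *: d) /\ `|'d f (z0 + t *: d) d - 'd f z0 d| <= e) ->
    `|f (z0 + h *: d) - f z0 - 'd f z0 d * h| <= e * h.
  by move=> f_diff f_close; apply: segment_increment => // t /f_close[/f_diff].
rewrite /shoelace /exterior_diff /deriv_weight mulr_sumr -sumrB -big_split mulr_sumr.
apply: le_trans (ler_norm_sum _ _ _) (ler_sum _ _) => i _ /=.
have Av := incr (A i) v (A_diff i) (fun t th => let: conj Wt c := close_v t th in conj Wt (c i).1).
have Bv := incr (B i) v (B_diff i) (fun t th => let: conj Wt c := close_v t th in conj Wt (c i).2).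
have Aw := incr (A i) w (A_diff i) (fun t th => let: conj Wt c := close_w t th in conj Wt (c i).1).
have Bw := incr (B i) w (B_diff i) (fun t th => let: conj Wt c := close_w t th in conj Wt (c i).2).
by have := approx_det h0 h0 Av Bv Aw Bw; rewrite -expr2.
Qed.

Lemma exterior_diff_small {z0 v w : V} {e : R} : 0 < e ->
  (\forall z \near z0, W z /\ close_derivs e z0 v z /\ close_derivs e z0 w z
                       /\ close_derivs e z0 (w - v) z) ->
  `|exterior_diff z0 v w| <= e * (3 * (deriv_weight e z0 v + deriv_weight e z0 w)
                                  + 2 * deriv_weight e z0 (w - v)).
Proof.
move=> e0 /(near_triangle _ _ v w)[h h0 near_h].
have h0' := ltW h0.
have on_v t : 0 <= t <= h -> W (z0 + t *: v) /\ close_derivs e z0 v (z0 + t *: v).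
  case/andP=> t0 th; have := near_h t 0 t0 (lexx 0).
  by rewrite scale0r !addr0 => /(_ th)[? []].
have on_w t : 0 <= t <= h -> W (z0 + t *: w) /\ close_derivs e z0 w (z0 + t *: w).
  case/andP=> t0 th; have := near_h 0 t (lexx 0) t0.
  by rewrite scale0r add0r addr0 => /(_ th)[? [_ []]].
have on_vw t : 0 <= t <= h ->
    W (z0 + h *: v + t *: (w - v)) /\ close_derivs e z0 (w - v) (z0 + h *: v + t *: (w - v)).
  case/andP=> t0 th; have := near_h (h - t) t; rewrite subr_ge0 subrK.
  rewrite (_ : z0 + (h - t) *: v + t *: w = z0 + h *: v + t *: (w - v)).
    by move=> /(_ th t0 (lexx h))[? [_ [_ ?]]].
  by rewrite scalerBr scalerBl -!addrA (addrC (- _)).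
have trap d P : (forall t, 0 <= t <= h -> W (P + t *: d) /\ close_derivs e z0 d (P + t *: d)) ->
    `|S (P + h *: d) - S P - trapezoid P (P + h *: d)| <= e * h ^+ 2 * deriv_weight e z0 d.
  move=> on_d.
  apply: (trapezoid_error _ _ _ _ (fun i => 'd (A i) z0 d) (fun i => 'd (B i) z0 d)) => //.
have t01 := trap v z0 on_v.
have t12 := trap (w - v) (z0 + h *: v) on_vw.
have t02 := trap w z0 on_w.
rewrite -[z0 + _ + h *: (w - v)]addrA -scalerDr (addrC v) subrK in t12.
have := shoelace_approx h0' on_v on_w; rewrite -trapezoid_shoelace.
set T := _ + _ - trapezoid _ _.
set C := exterior_diff z0 v w => approx.
have T_small : `|T| <= e * h ^+ 2 * (deriv_weight e z0 v + deriv_weight e z0 (w - v)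
                                       + deriv_weight e z0 w).
  set e01 := S _ - S z0 - _ in t01; set e12 := S _ - S _ - _ in t12.
  set e02 := S _ - S z0 - _ in t02.
  rewrite (_ : T = e02 - e01 - e12); last by rewrite /T /e01 /e12 /e02; ring.
  have := ler_normB (e02 - e01) e12; have := ler_normB e02 e01; lra.
have := ler_normB (2 * T) (2 * T - h ^+ 2 * C).
rewrite (_ : 2 * T - (2 * T - h ^+ 2 * C) = h ^+ 2 * C); last by ring.
rewrite normrM [`|2 * T|]normrM (ger0_norm (exprn_ge0 2 h0')) normr_nat => C_le.
rewrite -(ler_pM2l (exprn_gt0 2 h0)); lra.
Qed.

Lemma near_close_derivs (z0 d : V) (e : R) : 0 < e ->
  (forall i, {for z0, continuous (fun z => 'd (A i) z d)} /\
             {for z0, continuous (fun z => 'd (B i) z d)}) ->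
  \forall z \near z0, close_derivs e z0 d z.
Proof.
move=> e0 cont; apply: filter_forall => i; have [cA cB] := cont i.
by apply/near_andP; split; [exact: cvgr_distC_le _ _ cA _ e0 | exact: cvgr_distC_le _ _ cB _ e0].
Qed.

Lemma exterior_diff_eq0 (z0 v w : V) : open W -> W z0 ->
  (forall i d, {for z0, continuous (fun z => 'd (A i) z d)} /\
               {for z0, continuous (fun z => 'd (B i) z d)}) ->
  exterior_diff z0 v w = 0.
Proof.
move=> oW Wz0 cont.
apply: (@eq0_of_small _ _ (3 * (deriv_weight 1 z0 v + deriv_weight 1 z0 w)
                           + 2 * deriv_weight 1 z0 (w - v))) => e /andP[e0 e1].
have weight_le d : deriv_weight e z0 d <= deriv_weight 1 z0 d.
  by apply: ler_sum => i _; rewrite lerD2l.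
apply: le_trans (exterior_diff_small e0 _) _.
  have W_near : \forall z \near z0, W z by apply: open_nbhs_nbhs.
  have close d := near_close_derivs z0 d e e0 (cont^~ d).
  have cv := close v; have cw := close w; have cwv := close (w - v).
  by do 3 (apply/near_andP; split => //).
apply: ler_wpM2l; first exact: ltW.
have := weight_le v; have := weight_le w; have := weight_le (w - v); lra.
Qed.

End ExactOneForm.

Section Calculus.
Context {R : realType}.

Lemma near_eq_diff {U V : normedModType R} {f g : U -> V} {z : U} :
  differentiable f z -> differentiable g z -> (\forall y \near z, f y = g y) ->
  'd f z = 'd g z :> (U -> V).
Proof.
move=> df dg fg; apply/funext => e.
by rewrite -(deriveE _ df) -(deriveE _ dg); apply: near_eq_derive.
Qed.

Lemma continuous_near_eq {T U : topologicalType} (f g : T -> U) (x : T) :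
  (\forall y \near x, f y = g y) -> {for x, continuous f} -> {for x, continuous g}.
Proof.
move=> fg cf; rewrite /prop_for /continuous_at -(nbhs_singleton fg).
exact: cvg_trans (near_eq_cvg fg) cf.
Qed.

Lemma diff_partial1 {U1 U2 V : normedModType R} (phi : U1 * U2 -> V) (a : U1) (b : U2) :
  differentiable phi (a, b) ->
  'd (fun x => phi (x, b)) a = (fun d => 'd phi (a, b) (d, 0)) :> (U1 -> V).
Proof.
move=> dphi; have dpair : is_diff a (fun x : U1 => (x, b)) (fun d => (d, 0)).
  have := is_diff_pair (is_diff_id a) (is_diff_cst b a). exact.
by rewrite (diff_comp (f := fun x : U1 => (x, b)) ex_diff dphi) diff_val.
Qed.

Lemma diff_partial2 {U1 U2 V : normedModType R} (phi : U1 * U2 -> V) (a : U1) (b : U2) :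
  differentiable phi (a, b) ->
  'd (fun y => phi (a, y)) b = (fun d => 'd phi (a, b) (0, d)) :> (U2 -> V).
Proof.
move=> dphi; have dpair : is_diff b (fun y : U2 => (a, y)) (fun d => (0, d)).
  have := is_diff_pair (is_diff_cst a b) (is_diff_id b). exact.
by rewrite (diff_comp (f := fun y : U2 => (a, y)) ex_diff dphi) diff_val.
Qed.

Lemma diff_fst {U V : normedModType R} (y : U * V) :
  differentiable (@fst U V) y /\ forall e, 'd (@fst U V) y e = e.1.
Proof.
have fst_cont : continuous (@fst U V) by move=> ?; apply: cvg_fst.
split; first exact: linear_differentiable.
by move=> e; rewrite diff_lin.
Qed.

End Calculus.

Section DotProduct.
Context {R : realType} {n : nat}.
Implicit Types a b p q x : 'rV[R]_n.

Lemma dotrvC a b : dotrv a b = dotrv b a.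
Proof. by apply: eq_bigr => i _; rewrite mulrC. Qed.

Lemma dotrv_is_linear a : linear (dotrv a).
Proof.
move=> k p q; rewrite /dotrv scaler_sumr -big_split /=; apply: eq_bigr => i _.
by rewrite !mxE mulrDr mulrCA.
Qed.

HB.instance Definition _ a :=
  GRing.isLinear.Build R 'rV[R]_n R _ (dotrv a) (dotrv_is_linear a).

Lemma dotrvDr a p q : dotrv a (p + q) = dotrv a p + dotrv a q.
Proof. exact: linearD. Qed.

Lemma dotrvZr a (k : R) p : dotrv a (k *: p) = k * dotrv a p.
Proof. exact: linearZ. Qed.

Lemma dotrvZl (k : R) a p : dotrv (k *: a) p = k * dotrv a p.
Proof. by rewrite dotrvC dotrvZr dotrvC. Qed.

Lemma dotrvNl a p : dotrv (- a) p = - dotrv a p.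
Proof. by rewrite -scaleN1r dotrvZl mulN1r. Qed.

Lemma dotrv0l p : dotrv 0 p = 0.
Proof. by rewrite -(scale0r 0) dotrvZl mul0r. Qed.

Lemma dotrv_continuous a : continuous (dotrv a).
Proof.
have -> : dotrv a = \sum_i (fun q : 'rV[R]_n => a 0 i * q 0 i).
  by apply/funext => q; rewrite fct_sumE.
elim/big_ind: _ => [|f g cf cg|i _ q]; first exact: cst_continuous.
  by move=> q; apply: continuousD; [exact: cf | exact: cg].
apply: (@continuousM _ _ (fun=> a 0 i) (fun q => q 0 i)).
  exact: cst_continuous.
exact: coord_continuous.
Qed.

Lemma diff_dotrv a q : differentiable (dotrv a) q /\ 'd (dotrv a) q = dotrv a :> (_ -> R).
Proof.
have ca := dotrv_continuous a.
by split; [exact: linear_differentiable | exact: diff_lin].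
Qed.

Lemma dotrv_gradrv (h : 'rV[R]_n -> R) q d : dotrv (gradrv h q) d = 'd h q d.
Proof.
rewrite /dotrv /gradrv {2}(row_sum_delta d) linear_sum; apply: eq_bigr => i _.
by rewrite mxE linearZ /= mulrC.
Qed.

Lemma gradrv_affine (c : R) a q : gradrv (fun p => c + dotrv p a) q = a.
Proof.
have -> : (fun p => c + dotrv p a) = cst c + dotrv a.
  by apply/funext => p; rewrite dotrvC.
have [da dE] := diff_dotrv a q.
apply/rowP => i; rewrite mxE diffD // diff_cst dE /= add0r.
rewrite /dotrv (bigD1 i) //= mxE !eqxx mulr1 big1 ?addr0 // => j /negPf ji.
by rewrite mxE ji andbF mulr0.
Qed.

Lemma dotrv_midpoint (p1 p0 x1 x0 : 'rV[R]_n) :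
  dotrv p1 x1 - dotrv p0 x0 =
  dotrv (2^-1 *: (p1 + p0)) (x1 - x0) + dotrv (p1 - p0) (2^-1 *: (x1 + x0)).
Proof.
rewrite /dotrv -sumrB -big_split; apply: eq_bigr => i _ /=.
by rewrite !mxE; field.
Qed.

End DotProduct.

Section Hamiltonian.
Context {R : realType} {n m : nat}.
Variables (fd : 'rV[R]_n * 'rV[R]_m -> 'rV[R]_n) (gd : 'rV[R]_n * 'rV[R]_m -> R).

Lemma diff_Hd (p : 'rV[R]_n) (q : 'rV[R]_n * 'rV[R]_m) :
  differentiable fd q -> differentiable gd q ->
  differentiable (fun q => Hd fd gd q.1 p q.2) q /\
  forall e, 'd (fun q => Hd fd gd q.1 p q.2) q e = 'd gd q e + dotrv p ('d fd q e).
Proof.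
move=> dfd dgd; have [ddot dotE] := diff_dotrv p (fd q).
have -> : (fun q => Hd fd gd q.1 p q.2) = gd + (dotrv p \o fd) by apply/funext => -[].
have dcomp := differentiable_comp dfd ddot.
split=> [|e]; first exact: differentiableD.
rewrite diffD //; congr (_ + _).
by rewrite (diff_comp dfd ddot) /= dotE.
Qed.

Lemma diff_Hd_x (x : 'rV[R]_n) (p : 'rV[R]_n) (u : 'rV[R]_m) (d : 'rV[R]_n) :
  differentiable fd (x, u) -> differentiable gd (x, u) ->
  'd (fun x => Hd fd gd x p u) x d = 'd gd (x, u) (d, 0) + dotrv p ('d fd (x, u) (d, 0)).
Proof.
move=> dfd dgd; have [dH dHE] := diff_Hd p _ dfd dgd.
by rewrite (diff_partial1 _ _ _ dH) /= dHE.
Qed.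

Lemma diff_Hd_u (x : 'rV[R]_n) (p : 'rV[R]_n) (u d : 'rV[R]_m) :
  differentiable fd (x, u) -> differentiable gd (x, u) ->
  'd (fun u => Hd fd gd x p u) u d = 'd gd (x, u) (0, d) + dotrv p ('d fd (x, u) (0, d)).
Proof.
move=> dfd dgd; have [dH dHE] := diff_Hd p _ dfd dgd.
by rewrite (diff_partial2 _ _ _ dH) /= dHE.
Qed.

End Hamiltonian.

Section MidpointScheme.
Context {R : realType} {n m : nat}.
Variables (fd : 'rV[R]_n * 'rV[R]_m -> 'rV[R]_n) (gd : 'rV[R]_n * 'rV[R]_m -> R).
Variables (tau : R) (W : set ('rV[R]_n * 'rV[R]_n)).
Variables (F : 'rV[R]_n * 'rV[R]_n -> 'rV[R]_n * 'rV[R]_n) (w : 'rV[R]_n * 'rV[R]_n -> 'rV[R]_m).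
Hypothesis fd_diff : forall q, differentiable fd q.
Hypothesis gd_diff : forall q, differentiable gd q.
Hypothesis tau_neq0 : tau != 0.
Hypothesis W_open : open W.
Hypothesis F_diff : forall z, W z -> differentiable F z.
Hypothesis w_diff : forall z, W z -> differentiable w z.
Hypothesis scheme : forall z, W z ->
  let xk := z.1 in let pk := z.2 in
  let xk1 := (F z).1 in let pk1 := (F z).2 in
  let xd := 2%:R^-1 *: (xk1 + xk) in
  let pd := 2%:R^-1 *: (pk1 + pk) in
  let ud := w z in
  [/\ tau^-1 *: (xk1 - xk) = gradrv (fun p => Hd fd gd xd p ud) pd,
      tau^-1 *: (pk1 - pk) = - gradrv (fun x => Hd fd gd x pd ud) xd
    & 0 = gradrv (fun u => Hd fd gd xd pd u) ud].

Definition xmid z := 2%:R^-1 *: ((F z).1 + z.1).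

Definition midpoint z := (xmid z, w z).

Definition generating_fun z := - tau * gd (midpoint z).

Lemma diff_xmid z : W z -> differentiable xmid z /\
  forall e, 'd xmid z e = 2%:R^-1 *: (('d F z e).1 + e.1).
Proof.
move=> Wz; have [dfst dfstE] := diff_fst z.
have dF1 := differentiable_comp (F_diff _ Wz) (diff_fst (F z)).1.
have -> : xmid = 2%:R^-1 *: (fst \o F + fst) by [].
have dsum : differentiable (fst \o F + fst) z := differentiableD dF1 dfst.
split=> [|e]; first exact: differentiableZ.
rewrite diffZ // diffD //=; congr (_ *: (_ + _)); last exact: dfstE.
by rewrite (diff_comp (F_diff _ Wz) (diff_fst _).1) /= (diff_fst _).2.
Qed.

Lemma diff_midpoint z : W z -> differentiable midpoint z /\
  forall e, 'd midpoint z e = ('d xmid z e, 'd w z e).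
Proof.
move=> Wz; have [dx _] := diff_xmid _ Wz; have dw := w_diff _ Wz.
by split=> [|e]; [exact: differentiable_pair | rewrite (diff_pair dx dw)].
Qed.

Lemma diff_generating_fun z : W z -> differentiable generating_fun z /\
  forall e, 'd generating_fun z e = - tau * 'd gd (midpoint z) ('d midpoint z e).
Proof.
move=> Wz; have [dm _] := diff_midpoint _ Wz.
have dg := differentiable_comp dm (gd_diff (midpoint z)).
have -> : generating_fun = - tau *: (gd \o midpoint) by [].
split=> [|e]; first exact: differentiableZ.
by rewrite diffZ //= (diff_comp dm (gd_diff _)).
Qed.

Lemma x_increment z : W z -> (F z).1 - z.1 = tau *: fd (midpoint z).
Proof.
move=> Wz; have [step_x _ _] := scheme _ Wz; rewrite /Hd gradrv_affine in step_x.
by rewrite -[LHS]scale1r -(mulfV tau_neq0) -scalerA step_x.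
Qed.

Lemma diff_x_increment z e : W z ->
  ('d F z e).1 - e.1 = tau *: 'd fd (midpoint z) ('d midpoint z e).
Proof.
move=> Wz; have [dm _] := diff_midpoint _ Wz.
have [dfst dfstE] := diff_fst z.
have dF1 := differentiable_comp (F_diff _ Wz) (diff_fst (F z)).1.
have dlhs : differentiable (fst \o F - fst) z := differentiableB dF1 dfst.
have dfdm := differentiable_comp dm (fd_diff (midpoint z)).
have drhs : differentiable (tau *: (fd \o midpoint)) z := differentiableZ _ dfdm.
have lhsE : 'd (fst \o F - fst) z e = ('d F z e).1 - e.1.
  rewrite diffB //=; congr (_ - _); last exact: dfstE.
  by rewrite (diff_comp (F_diff _ Wz) (diff_fst _).1) /= (diff_fst _).2.
rewrite -lhsE (near_eq_diff dlhs drhs) ?diffZ //= ?(diff_comp dm (fd_diff _)) //.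
near=> y; apply: x_increment; near: y; exact: open_nbhs_nbhs.
Unshelve. all: by end_near. Qed.

(* Midpoint rule: p₁·dx₁ − p₀·dx₀ = p̄·d(x₁ − x₀) + (p₁ − p₀)·dx̄.  By the scheme the first
   term is τ p̄·d f_d and the second −τ ∂ₓH·dx̄; ∂ᵤH = 0 cancels the u-part of p̄·d f_d,
   which leaves −τ d g_d. *)
Lemma generating_fun_primitive z e : W z ->
  'd generating_fun z e = dotrv (F z).2 ('d F z e).1 - dotrv z.2 e.1.
Proof.
move=> Wz; have [_ step_p step_u] := scheme _ Wz.
have [_ dmE] := diff_midpoint _ Wz; have [_ dxE] := diff_xmid _ Wz.
set pd := 2%:R^-1 *: ((F z).2 + z.2) in step_p step_u.
set dx := 'd xmid z e; set du := 'd w z e.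
have dm_split : 'd midpoint z e = (dx, 0) + (0, du).
  by rewrite dmE; apply: injective_projections; rewrite /= ?addr0 ?add0r.
have fd_split : 'd fd (midpoint z) ('d midpoint z e) =
    'd fd (midpoint z) (dx, 0) + 'd fd (midpoint z) (0, du) by rewrite dm_split linearD.
have gd_split : 'd gd (midpoint z) ('d midpoint z e) =
    'd gd (midpoint z) (dx, 0) + 'd gd (midpoint z) (0, du) by rewrite dm_split linearD.
have Hx := diff_Hd_x fd gd (xmid z) pd (w z) dx (fd_diff (midpoint z)) (gd_diff (midpoint z)).
have Hu := diff_Hd_u fd gd (xmid z) pd (w z) du (fd_diff (midpoint z)) (gd_diff (midpoint z)).
rewrite -dotrv_gradrv -step_u dotrv0l in Hu.
rewrite -dotrv_gradrv in Hx.
have p_step : (F z).2 - z.2 = tau *: - gradrv (fun x => Hd fd gd x pd (w z)) (xmid z).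
  by rewrite -[LHS]scale1r -(mulfV tau_neq0) -scalerA step_p.
rewrite dotrv_midpoint diff_x_increment // -dxE p_step (diff_generating_fun _ Wz).2.
rewrite fd_split gd_split -/pd -/dx dotrvZr dotrvDr [dotrv (tau *: _) _]dotrvZl dotrvNl Hx.
have -> : 'd gd (midpoint z) (0, du) = - dotrv pd ('d fd (midpoint z) (0, du)).
  by apply/eqP; rewrite -addr_eq0 Hu.
ring.
Qed.

End MidpointScheme.

Section Graph.
Context {R : realType} {n : nat}.
Local Notation phase := ('rV[R]_n * 'rV[R]_n)%type.

(* Coordinates on pairs (F z, z) in which p₁·dx₁ − p₀·dx₀ reads Σⱼ graph_p j · d(graph_x j). *)
Definition graph_p (j : 'I_n + 'I_n) (y : phase * phase) : R :=
  match j with inl i => y.1.2 0 i | inr i => - y.2.2 0 i end.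

Definition graph_x (j : 'I_n + 'I_n) (y : phase * phase) : R :=
  match j with inl i => y.1.1 0 i | inr i => y.2.1 0 i end.

Lemma graph_p_is_linear j : linear (graph_p j).
Proof. by case: j => i k y y'; rewrite /= !mxE // opprD scalerN. Qed.

Lemma graph_x_is_linear j : linear (graph_x j).
Proof. by case: j => i k y y'; rewrite /= !mxE. Qed.

HB.instance Definition _ j :=
  GRing.isLinear.Build R (phase * phase)%type R _ (graph_p j) (graph_p_is_linear j).
HB.instance Definition _ j :=
  GRing.isLinear.Build R (phase * phase)%type R _ (graph_x j) (graph_x_is_linear j).

Lemma sum_graph_px (y y' : phase * phase) :
  \sum_j graph_p j y * graph_x j y' = dotrv y.1.2 y'.1.1 - dotrv y.2.2 y'.2.1.
Proof.
rewrite big_sumType /dotrv -sumrN; congr (_ + _).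
by apply: eq_bigr => i _; rewrite mulNr.
Qed.

Lemma graph_coords_continuous j :
  continuous (graph_p j) /\ continuous (graph_x j).
Proof.
have comp (U V X : normedModType R) (f : U -> V) (g : V -> X) :
    continuous f -> continuous g -> continuous (g \o f).
  by move=> cf cg y; have := continuous_comp (cf y) (cg (f y)); exact.
have coord i (c : phase * phase -> 'rV[R]_n) : continuous c -> continuous (fun y => c y 0 i).
  by move=> cc y; have := continuous_comp (cc y) (@coord_continuous _ _ _ 0 i (c y)); exact.
have c_fst (U V : normedModType R) : continuous (@fst U V) by move=> ?; apply: cvg_fst.
have c_snd (U V : normedModType R) : continuous (@snd U V) by move=> ?; apply: cvg_snd.
have c11 := comp _ _ _ _ _ (c_fst phase phase) (c_fst 'rV[R]_n 'rV[R]_n).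
have c12 := comp _ _ _ _ _ (c_fst phase phase) (c_snd 'rV[R]_n 'rV[R]_n).
have c21 := comp _ _ _ _ _ (c_snd phase phase) (c_fst 'rV[R]_n 'rV[R]_n).
have c22 := comp _ _ _ _ _ (c_snd phase phase) (c_snd 'rV[R]_n 'rV[R]_n).
case: j => i; split; [have := coord i _ c12 | have := coord i _ c11 | | have := coord i _ c21];
  try exact.
by move=> y; apply: continuousN; have := coord i _ c22 y; exact.
Qed.

Variables (W : set phase) (F : phase -> phase).
Hypothesis F_diff : forall z, W z -> differentiable F z.

Definition graph z : phase * phase := (F z, z).

Lemma diff_graph_coord {L : {linear (phase * phase)%type -> R}} {z} : continuous L -> W z ->
  differentiable (L \o graph) z /\ forall e, 'd (L \o graph) z e = L ('d F z e, e).
Proof.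
move=> Lc Wz; have [did didE] := is_diff_id z.
have dG : differentiable graph z := differentiable_pair (F_diff _ Wz) did.
have dL := linear_differentiable (graph z) Lc.
split=> [|e]; first exact: differentiable_comp dG dL.
have ide : 'd (@id phase) z e = e by rewrite didE.
rewrite (diff_comp dG dL) /= (diff_pair (F_diff _ Wz) did) /= (diff_lin _ Lc).
by congr (L (_, _)).
Qed.

Lemma graph_form_sum z e : W z ->
  \sum_j (graph_p j \o graph) z * 'd (graph_x j \o graph) z e
    = dotrv (F z).2 ('d F z e).1 - dotrv z.2 e.1.
Proof.
move=> Wz; rewrite -[RHS](sum_graph_px (graph z) ('d F z e, e)).
apply: eq_bigr => j _; congr (_ * _).
by have := (diff_graph_coord (graph_coords_continuous j).2 Wz).2 e.
Qed.

Lemma exterior_diff_graph z v w : W z ->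
  exterior_diff (fun j => graph_p j \o graph) (fun j => graph_x j \o graph) z v w
    = omega ('d F z v) ('d F z w) - omega v w.
Proof.
move=> Wz; have dp j := (diff_graph_coord (graph_coords_continuous j).1 Wz).2.
have dx j := (diff_graph_coord (graph_coords_continuous j).2 Wz).2.
rewrite /exterior_diff (eq_bigr (fun j => graph_p j ('d F z v, v) * graph_x j ('d F z w, w)
    - graph_p j ('d F z w, w) * graph_x j ('d F z v, v))) => [|j _]; last first.
  by rewrite !dp !dx.
by rewrite sumrB !sum_graph_px /omega /=; ring.
Qed.

Lemma graph_coords_diff_continuous j (d z0 : phase) : open W -> W z0 ->
  {for z0, continuous (fun z => 'd F z d)} ->
  {for z0, continuous (fun z => 'd (graph_p j \o graph) z d)} /\
  {for z0, continuous (fun z => 'd (graph_x j \o graph) z d)}.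
Proof.
move=> oW Wz0 cF.
have W_near : \forall z \near z0, W z by apply: open_nbhs_nbhs.
have cpair : {for z0, continuous (fun z => ('d F z d, d))} by apply: cvg_pair cF (cvg_cst d).
have [cp cx] := graph_coords_continuous j.
split.
  apply: (continuous_near_eq (fun z => graph_p j ('d F z d, d))).
    by near=> z; rewrite (diff_graph_coord cp _).2 //; near: z.
  by have := continuous_comp cpair (cp _); exact.
apply: (continuous_near_eq (fun z => graph_x j ('d F z d, d))).
  by near=> z; rewrite (diff_graph_coord cx _).2 //; near: z.
by have := continuous_comp cpair (cx _); exact.
Unshelve. all: by end_near. Qed.

End Graph.

Theorem mainTheorem9 (R : realType) (n m : nat)
  (fd : 'rV[R]_n * 'rV[R]_m -> 'rV[R]_n) (gd : 'rV[R]_n * 'rV[R]_m -> R)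
  (tau : R) (W : set ('rV[R]_n * 'rV[R]_n))
  (F : 'rV[R]_n * 'rV[R]_n -> 'rV[R]_n * 'rV[R]_n)
  (w : 'rV[R]_n * 'rV[R]_n -> 'rV[R]_m) :
  C1 fd -> C1 gd -> 0 < tau -> open W -> C1_on W F -> C1_on W w ->
  (forall z, W z ->
     let xk := z.1 in let pk := z.2 in
     let xk1 := (F z).1 in let pk1 := (F z).2 in
     let xd := 2%:R^-1 *: (xk1 + xk) in
     let pd := 2%:R^-1 *: (pk1 + pk) in
     let ud := w z in
     [/\ tau^-1 *: (xk1 - xk) = gradrv (fun p => Hd fd gd xd p ud) pd,
         tau^-1 *: (pk1 - pk) = - gradrv (fun x => Hd fd gd x pd ud) xd
       & 0 = gradrv (fun u => Hd fd gd xd pd u) ud]) ->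
  symplectic_on W F.
Proof.
move=> [fd_diff _] [gd_diff _] tau_gt0 W_open [F_diff dF_cont] [w_diff _] scheme z Wz v1 v2.
have tau_neq0 : tau != 0 := lt0r_neq0 tau_gt0.
apply/eqP; rewrite -subr_eq0 -(exterior_diff_graph _ _ F_diff _ _ _ Wz); apply/eqP.
apply: (exterior_diff_eq0 _ _ (generating_fun gd tau F w) W) => //.
- by move=> j y Wy; exact: (diff_graph_coord _ _ F_diff (graph_coords_continuous j).1 Wy).1.
- by move=> j y Wy; exact: (diff_graph_coord _ _ F_diff (graph_coords_continuous j).2 Wy).1.
- by move=> y Wy; exact: (diff_generating_fun _ _ _ _ _ gd_diff F_diff w_diff _ Wy).1.
- move=> y Wy e; rewrite (graph_form_sum _ _ F_diff _ _ Wy).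
  exact: (generating_fun_primitive _ _ _ _ _ _ fd_diff gd_diff tau_neq0 W_open F_diff w_diff
    scheme _ _ Wy).
- move=> j d.
  exact: (graph_coords_diff_continuous _ _ F_diff j d z W_open Wz (dF_cont d z Wz)).
Qed.
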